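(* Let $k\geq2$, $n$, $r$ be positive integers with $r<\frac{(k-1)n}{k}$, and let $\mathcal{F}\subseteq\binom{[n]}{r}$ be $k$-wise intersecting. Let $\sigma$ be a permutation of $[n]$ (viewed as a cyclic order) such that $|\mathcal{F}_\sigma|=r$ and every member of $\mathcal{F}_\sigma$ contains $\sigma(v)$, for some position $v\in[n]$. Let $i\in[n]\setminus\{v,v-1\}$ (where $v-1=n$ if $v=1$), and let $\mu$ be obtained from $\sigma$ by swapping the entries in positions $i$ and $i+1$ (where $i+1=1$ if $i=n$). If $|\mathcal{F}_\mu|=r$, then every member of $\mathcal{F}_\mu$ contains $\sigma(v)$.
   Context: $\binom{[n]}{r}$ is the family of $r$-subsets of $[n]$. A family is $k$-wise intersecting if any $k$ of its members have nonempty common intersection. For a permutation $\sigma$ of $[n]$, a $\sigma$-interval of length $r$ is a set $\{\sigma(x),\sigma(x+1),\dots,\sigma(x+r-1)\}$ for some $x\in[n]$, indices modulo $n$; $\mathcal{F}_\sigma$ denotes the set of members of $\mathcal{F}$ that are $\sigma$-intervals. (The paper calls $\sigma$ saturated if $|\mathcal{F}_\sigma|=r$, and $v$-saturated if moreover all members of $\mathcal{F}_\sigma$ contain the common point at position $v$.) *)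

From mathcomp Require Import all_boot all_fingroup.
Set Implicit Arguments. Unset Strict Implicit. Unset Printing Implicit Defensive.

(* Ground set [n] is modelled by 'I_n = {0,...,n-1}; positions are also 'I_n.
   A permutation sigma : {perm 'I_n} maps positions to elements. *)

(* The sigma-interval of length r starting at position x:
   { sigma(x), sigma(x+1), ..., sigma(x+r-1) }, positions modulo n. *)
Definition interval (n : nat) (s : {perm 'I_n}) (r : nat) (x : 'I_n) : {set 'I_n} :=
  [set s y | y : 'I_n & ((y + n - x) %% n < r)%N].

Definition Fsig (n r : nat) (F : {set {set 'I_n}}) (s : {perm 'I_n}) : {set {set 'I_n}} :=
  [set A in F | [exists x : 'I_n, A == interval s r x]].

Definition uniform (n r : nat) (F : {set {set 'I_n}}) : Prop :=
  forall A, A \in F -> #|A| = r.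

(* k-wise intersecting: any k members (not necessarily distinct) F_1..F_k of F
   have nonempty common intersection. *)
Definition kwise_intersecting (n k : nat) (F : {set {set 'I_n}}) : Prop :=
  forall f : 'I_k -> {set 'I_n}, (forall j, f j \in F) ->
    \bigcap_(j < k) f j != set0.

From mathcomp Require Import all_boot all_fingroup zify.

Set Implicit Arguments.
Unset Strict Implicit.
Unset Printing Implicit Defensive.

(* Measure positions by their cyclic offset from [v].  Since [F_sigma] has [r]
   members all containing [sigma v], it consists exactly of the [r] sigma-intervals
   through [sigma v], starting at offsets [-t] for [t < r].  As [mu] differs from
   [sigma] by an adjacent swap away from [v], a mu-interval missing [sigma v] has
   all its elements at sigma-offsets in a window [[a, a + r]] with [1 <= a] and
   [a + r <= n].  Since [r < (k - 1)(n - r)], the complements of [k - 1] of the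
   intervals through [sigma v], shifted by multiples of [n - r], cover that
   window, so these [k] members of [F] have empty common intersection. *)

Definition offset (n x y : nat) : nat := ((x + n - y) %% n)%N.

Section CyclicOffset.

Variable n : nat.

Lemma modn_lt_double {m} : (m < n.*2)%N ->
  (m < n /\ m %% n = m)%N \/ (n <= m /\ m %% n = m - n)%N.
Proof.
move=> lt_m_2n; case: (ltnP m n) => [lt_mn | le_nm].
  by left; rewrite modn_small.
right; split => //; rewrite -{1}(subnK le_nm) modnDr modn_small //; lia.
Qed.

Lemma offsetP {x y} : (x < n)%N -> (y < n)%N ->
  (y <= x /\ offset n x y = x - y)%N \/ (x < y /\ offset n x y = x + n - y)%N.
Proof. move=> xn yn; have := @modn_lt_double (x + n - y); rewrite /offset; lia. Qed.

Lemma offset_lt x y : (0 < n)%N -> (offset n x y < n)%N.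
Proof. exact: ltn_pmod. Qed.

Lemma offsetK x y : (x < n)%N -> (y < n)%N -> offset n y (offset n y x) = x.
Proof.
move=> xn yn; have h1 := offsetP yn xn.
have h2 : (offset n y x < n)%N by case: h1; lia.
have := offsetP yn h2; lia.
Qed.

Lemma offset_rebase x y z : (x < n)%N -> (y < n)%N -> (z < n)%N ->
  offset n x y = offset n (offset n x z) (offset n y z).
Proof.
move=> xn yn zn; have [xz yz] := (offsetP xn zn, offsetP yn zn).
have [xzn yzn] : (offset n x z < n /\ offset n y z < n)%N by case: xz; case: yz; lia.
have := offsetP xn yn; have := offsetP xzn yzn.
by case: xz => -[? ?]; case: yz => -[? ?]; lia.
Qed.

Lemma offset_shift x y t : (x < n)%N -> (y < n)%N -> (t < n)%N ->
  offset n x (offset n y t) = ((offset n x y + t) %% n)%N.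
Proof.
move=> xn yn tn; have yt := offsetP yn tn.
have ytn : (offset n y t < n)%N by case: yt; lia.
have := offsetP xn ytn; have := @modn_lt_double (offset n x y + t).
by case: yt => -[? ?]; case: (offsetP xn yn) => -[? ?]; lia.
Qed.

Lemma offset_inj z x y : (x < n)%N -> (y < n)%N -> (z < n)%N ->
  offset n x z = offset n y z -> x = y.
Proof. by move=> xn yn zn; have := offsetP xn zn; have := offsetP yn zn; lia. Qed.

Lemma offset_ordS (i z : 'I_n) : ordS i != z ->
  offset n (ordS i) z = (offset n i z).+1.
Proof.
have [iln zn] := (ltn_ord i, ltn_ord z); have iz := offsetP iln zn.
have := offsetP (ltn_ord (ordS i)) zn; rewrite -(inj_eq val_inj) /=.
case: (ltnP i.+1 n) => [Sin | nSi]; first by rewrite modn_small //; lia.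
have -> : i.+1 = n by lia.
by rewrite modnn; lia.
Qed.

(* Shifting by [t] moves the offset window [0, r) to [n - t, n - t + r) mod n,
   leaving a gap of width [n - r]; [k - 1] consecutive gaps cover [a, a + r].
   Truncated subtraction clamps the late shifts to [0], whose gap is [r, n). *)
Lemma offset_shifts_cover k r a d : (1 <= a)%N -> (a + r <= n)%N ->
  (r < (k - 1) * (n - r))%N -> (a <= d <= a + r)%N -> (d < n)%N ->
  exists2 j, (j < k.-1)%N & (r <= (d + (r - a - j * (n - r))) %% n)%N.
Proof.
move=> a_gt0 arn r_lt /andP [ad dar] dn.
have w_gt0 : (0 < n - r)%N by case: (n - r) r_lt; rewrite ?muln0.
have := divn_eq (d - a) (n - r); have := ltn_pmod (d - a) w_gt0.
set j := ((d - a) %/ (n - r))%N => rem_lt dE; exists j.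
  rewrite -(ltn_pmul2r w_gt0); have -> : k.-1 = (k - 1)%N by lia.
  by apply: leq_ltn_trans r_lt; lia.
move: dE rem_lt; move: (j * (n - r))%N => jw dE rem_lt.
case: (leqP jw (r - a)) => jw_r; first by rewrite modn_small; lia.
by rewrite (_ : r - a - jw = 0)%N ?addn0 ?modn_small; lia.
Qed.

End CyclicOffset.

Section Intervals.

Variables (n : nat) (n_gt0 : (0 < n)%N) (r : nat).

Lemma mem_interval (s : {perm 'I_n}) x p :
  (s p \in interval s r x) = (offset n p x < r)%N.
Proof. by rewrite /interval mem_imset ?inE //; apply: perm_inj. Qed.

Definition ord_back (v : 'I_n) (t : nat) : 'I_n := Ordinal (offset_lt v t n_gt0).

Lemma mem_interval_back (s : {perm 'I_n}) v t p : (t < n)%N ->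
  (s p \in interval s r (ord_back v t)) = ((offset n p v + t) %% n < r)%N.
Proof. by move=> tn; rewrite mem_interval offset_shift. Qed.

Lemma ord_backK (v x : 'I_n) : ord_back v (offset n v x) = x.
Proof. by apply: val_inj; rewrite /= offsetK. Qed.

Lemma saturated_intervals_mem (F : {set {set 'I_n}}) (s : {perm 'I_n}) (v : 'I_n) :
  (r < n)%N -> #|Fsig r F s| = r -> (forall A, A \in Fsig r F s -> s v \in A) ->
  forall t, (t < r)%N -> interval s r (ord_back v t) \in F.
Proof.
move=> rn cardF allv.
have sub : Fsig r F s \subset [set interval s r (ord_back v t) | t : 'I_r].
  apply/subsetP => B BF; have := allv B BF.
  move: BF; rewrite inE => /andP [AF /existsP [x /eqP ->]].
  rewrite mem_interval => vx; apply/imsetP; exists (Ordinal vx) => //=.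
  by rewrite ord_backK.
have FsigE : Fsig r F s = [set interval s r (ord_back v t) | t : 'I_r].
  apply/eqP; rewrite eqEcard sub cardF /=.
  by apply: leq_trans (leq_imset_card _ _) _; rewrite card_ord.
move=> t tr; have : interval s r (ord_back v t) \in Fsig r F s.
  by rewrite FsigE; apply/imsetP; exists (Ordinal tr).
by rewrite inE => /andP [].
Qed.

(* With [D := offset n y v], the mu-interval at [y] is the set of [sigma p] with
   [tperm i (ordS i) p] at offset in [[D, D + r)].  The swap moves offsets by at
   most one; an offset [D - 1] only occurs when [i] sits there, and then no
   offset reaches [D + r]. *)
Lemma swap_interval_offsets (sigma mu : {perm 'I_n}) (v i y : 'I_n) :
  (0 < r)%N -> i != v -> ordS i != v ->
  (forall x, mu x = sigma (tperm i (ordS i) x)) -> sigma v \notin interval mu r y ->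
  exists a, [/\ 1 <= a, a + r <= n &
    forall p, sigma p \in interval mu r y -> a <= offset n p v <= a + r]%N.
Proof.
move=> r_gt0 iv Siv muE vA.
have memA p : (sigma p \in interval mu r y) =
    (offset n (offset n (tperm i (ordS i) p) v) (offset n y v) < r)%N.
  by rewrite -{1}(tpermK i (ordS i) p) -muE mem_interval -offset_rebase.
have [vn yn] := (ltn_ord v, ltn_ord y).
have offS_i : offset n (ordS i) v = (offset n i v).+1 := offset_ordS Siv.
have off_i_gt0 : (0 < offset n i v)%N.
  have iv' : (nat_of_ord i != v)%N := iv.
  by have := offsetP (ltn_ord i) vn; have := ltn_ord i; lia.
have [off_y_gt0 off_y_r] : (0 < offset n y v /\ offset n y v + r <= n)%N.
  move: vA; rewrite memA (tpermD iv Siv).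
  have := offsetP vn vn; have := offset_lt y v n_gt0.
  have := offsetP (offset_lt v v n_gt0) (offset_lt y v n_gt0).
  lia.
exists (if (offset n i v).+1 == offset n y v
        then (offset n y v).-1 else offset n y v).
split; [by case: eqP; lia | by case: eqP; lia | move=> p; rewrite memA].
have := offsetP (offset_lt (tperm i (ordS i) p) v n_gt0) (offset_lt y v n_gt0).
case: tpermP => [-> | -> | p_i p_Si]; rewrite ?offS_i.
- by case: eqP; lia.
- by case: eqP; lia.
have [pn iln] := (ltn_ord p, ltn_ord i).
have : offset n p v <> offset n i v by move=> /(offset_inj pn iln vn) /val_inj.
have : offset n p v <> (offset n i v).+1.
  by rewrite -offS_i => /(offset_inj pn (ltn_ord _) vn) /val_inj.
by case: eqP; lia.
Qed.

End Intervals.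

Theorem lemma2p3 (k n r : nat) (F : {set {set 'I_n}})
  (sigma mu : {perm 'I_n}) (v i : 'I_n) :
  (2 <= k)%N -> (0 < n)%N -> (0 < r)%N ->
  (r * k < (k - 1) * n)%N ->
  uniform r F ->
  kwise_intersecting k F ->
  #|Fsig r F sigma| = r ->
  (forall A, A \in Fsig r F sigma -> sigma v \in A) ->
  i != v -> i != ord_pred v ->
  (forall x, mu x = sigma (tperm i (ordS i) x)) ->
  #|Fsig r F mu| = r ->
  forall A, A \in Fsig r F mu -> sigma v \in A.
Proof.
move=> k2 n_gt0 r_gt0 rkn _ kwF cardS allv iv ipv muE _ A.
rewrite inE => /andP [AF /existsP [y /eqP Ay]]; subst A; apply: contraT => vA.
have rn : (r < n)%N by nia.
have r_lt : (r < (k - 1) * (n - r))%N by rewrite mulnBr; nia.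
have Siv : ordS i != v by apply: contra ipv => /eqP <-; rewrite ordSK.
have [a [a_gt0 arn offA]] := swap_interval_offsets n_gt0 r_gt0 iv Siv muE vA.
pose shift j := (r - a - j * (n - r))%N.
pose f (j : 'I_k) := if (j < k.-1)%N
  then interval sigma r (ord_back n_gt0 v (shift j)) else interval mu r y.
have fF j : f j \in F.
  rewrite /f; case: ifP => // _.
  by apply: saturated_intervals_mem => //; rewrite /shift; lia.
have /set0Pn [e /bigcapP common] := kwF f fF.
have [p pE] : exists p, e = sigma p by exists (sigma^-1 e)%g; rewrite permKV.
have last_k : (k.-1 < k)%N by lia.
have /offA pA : sigma p \in interval mu r y.
  by rewrite -pE; have := common (Ordinal last_k) isT; rewrite /f /= ltnn.
have [j jk avoid] := offset_shifts_cover a_gt0 arn r_lt pA (offset_lt p v n_gt0).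
have j_lt_k : (j < k)%N by lia.
have := common (Ordinal j_lt_k) isT; rewrite pE /f /= jk.
by rewrite mem_interval_back ?ltnNge ?avoid // /shift; lia.
Qed.
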